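(* Let $M$ be a connected topological manifold, $\Gamma$ a simple graph, and $H$ a complete subgraph of $\Gamma$. Then the map $\pi_\Gamma^H:\mathrm{Conf}_{\Gamma}(M)\to\mathrm{Conf}_{H}(M)$ is a (locally trivial) bundle projection.
   Context: For a graph $G$, $\mathrm{Conf}_{G}(M)=\{(x_v)_{v\in V(G)}\in M^{V(G)}: x_u\neq x_v\text{ whenever }\{u,v\}\in E(G)\}$. A complete subgraph $H$ of $\Gamma$ is a subgraph in which any two vertices are adjacent. The map $\pi_\Gamma^H$ sends $(x_v)_{v\in V(\Gamma)}$ to $(x_v)_{v\in V(H)}$ (forgetting the coordinates indexed by vertices not in $H$). *)

From HB Require Import structures.
From mathcomp Require Import all_boot all_order all_algebra.
From mathcomp Require Import all_classical all_reals all_analysis.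
From mathcomp Require Import Rstruct Rstruct_topology.

Set Implicit Arguments. Unset Strict Implicit. Unset Printing Implicit Defensive.
Import Order.TTheory GRing.Theory Num.Theory.
Local Open Scope classical_set_scope.

Definition homeo_on {X Y : topologicalType} (A : set X) (B : set Y)
  (f : X -> Y) (g : Y -> X) : Prop :=
  [/\ {within A, continuous f}, {within B, continuous g},
      (forall x, A x -> B (f x) /\ g (f x) = x) &
      (forall y, B y -> A (g y) /\ f (g y) = y)].

Definition topological_manifold (M : topologicalType) : Prop :=
  [/\ hausdorff_space M, @second_countable M &
      exists n : nat, forall x : M, exists U : set M,
        [/\ open U, U x &
          exists (V : set 'rV[Rdefinitions.R]_n) (f : M -> 'rV[Rdefinitions.R]_n) g,
            open V /\ homeo_on U V f g]].

Definition simple_graph (V : finType) (e : rel V) : Prop :=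
  (forall u v, e u v = e v u) /\ (forall v, ~~ e v v).

Definition subgraph (W V : finType) (eH : rel W) (e : rel V) (i : W -> V) : Prop :=
  injective i /\ (forall w w', eH w w' -> e (i w) (i w')).

Definition complete_graph (W : finType) (eH : rel W) : Prop :=
  forall w w', w != w' -> eH w w'.

Definition Conf (V : finType) (e : rel V) (M : topologicalType) : set {ptws V -> M} :=
  [set x | forall u v, e u v -> x u <> x v].

Definition forget (W V : finType) (i : W -> V) (M : topologicalType)
  (x : {ptws V -> M}) : {ptws W -> M} := fun w => x (i w).

Definition locally_trivial_bundle {E B : topologicalType} (Es : set E) (Bs : set B)
  (p : E -> B) : Prop :=
  [/\ (forall x, Es x -> Bs (p x)), {within Es, continuous p} &
    forall b, Bs b -> exists U : set B,
      [/\ open U, U b &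
        exists (F : topologicalType) (Fs : set F)
               (phi : E -> B * F) (psi : B * F -> E),
          homeo_on (Es `&` p @^-1` U) ((Bs `&` U) `*` Fs) phi psi /\
          (forall x, (Es `&` p @^-1` U) x -> (phi x).1 = p x)]].

Arguments Conf [V] e M _.
Arguments forget [W V] i M x _.

(* Near a configuration [b] of the complete graph [H], the points [b w] are
   pairwise distinct, so they have pairwise disjoint open neighbourhoods
   [O w].  Inside a chart around [b w] there are homeomorphisms [h w y] of [M],
   depending continuously on [y] near [b w], that move [b w] to [y] and are
   the identity outside a compact subset of [O w]; in coordinates they are
   composites of piecewise-linear shears, one coordinate at a time, each with
   an explicit inverse.  As the supports are disjoint, the composite [H y] of
   the [h w (y w)] moves every [b w] to [y w], and [x |-> (pi x, H (pi x)^-1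
   o x)] identifies [pi^-1 U] with [U * pi^-1 b] over a neighbourhood [U] of
   [b]. *)

From mathcomp Require Import all_boot all_order all_algebra.
From mathcomp Require Import all_classical all_reals all_analysis.
From mathcomp Require Import Rstruct Rstruct_topology.
From mathcomp Require Import ring lra.
Set Implicit Arguments. Unset Strict Implicit. Unset Printing Implicit Defensive.
Import Order.TTheory GRing.Theory Num.Theory.
Import numFieldNormedType.Exports.
Local Open Scope classical_set_scope.
Local Open Scope ring_scope.


Section slide.
Variable R : realFieldType.
Implicit Types lo a b hi x t : R.

Definition tent lo a hi x : R :=
  Num.max 0 (Num.min ((x - lo) / (a - lo)) ((hi - x) / (hi - a))).

(* For [lo < a, b < hi]: a piecewise-linear homeomorphism of R moving [a]
   to [b] and fixing everything outside [(lo, hi)]. *)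
Definition slide lo hi a b x : R := x + (b - a) * tent lo a hi x.

Lemma tent_ge0 lo a hi x : 0 <= tent lo a hi x.
Proof. by rewrite /tent le_max lexx. Qed.

Lemma tent_le1 lo a hi x : lo < a < hi -> tent lo a hi x <= 1.
Proof.
move=> /andP[la ah]; rewrite /tent ge_max ler01 ge_min.
have [xa|ax] := lerP x a; apply/orP; [left|right];
  rewrite ler_pdivrMr ?subr_gt0 // mul1r; first by rewrite lerD2r.
by rewrite lerD2l lerN2 ltW.
Qed.

Lemma tent_eq0 lo a hi x : lo < a < hi -> x <= lo \/ hi <= x ->
  tent lo a hi x = 0.
Proof.
move=> /andP[la ah] xout; apply/max_idPl; rewrite ge_min.
by case: xout => ?; apply/orP; [left|right];
  rewrite ler_pdivrMr ?subr_gt0 // mul0r subr_le0.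
Qed.

Lemma tent_left lo a hi t : lo < a < hi -> 0 <= t <= 1 ->
  tent lo a hi (lo + t * (a - lo)) = t.
Proof.
move=> /andP[la ah] /andP[t0 t1].
have e1 : (lo + t * (a - lo) - lo) / (a - lo) = t.
  by rewrite addrAC subrr add0r mulfK // subr_eq0 gt_eqF.
rewrite /tent e1 (min_idPl _) ?(max_idPr _) // ler_pdivlMr ?subr_gt0 //.
have : 0 <= (1 - t) * (a - lo) by rewrite mulr_ge0 ?subr_ge0 // ltW.
have : t * (hi - a) <= hi - a by rewrite ler_piMl // subr_ge0 ltW.
lra.
Qed.

Lemma tent_right lo a hi t : lo < a < hi -> 0 <= t <= 1 ->
  tent lo a hi (hi - t * (hi - a)) = t.
Proof.
move=> /andP[la ah] /andP[t0 t1].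
have e1 : (hi - (hi - t * (hi - a))) / (hi - a) = t.
  by rewrite opprB addrCA subrr addr0 mulfK // subr_eq0 gt_eqF.
rewrite /tent e1 (min_idPr _) ?(max_idPr _) // ler_pdivlMr ?subr_gt0 //.
have : 0 <= (1 - t) * (hi - a) by rewrite mulr_ge0 ?subr_ge0 // ltW.
have : t * (a - lo) <= a - lo by rewrite ler_piMl // subr_ge0 ltW.
lra.
Qed.

Lemma tent_peak lo a hi : lo < a < hi -> tent lo a hi a = 1.
Proof.
move=> h; have := @tent_left lo a hi 1 h; rewrite mul1r addrCA subrr addr0.
by apply; rewrite ler01 lexx.
Qed.

Lemma slide_out lo hi a b x : lo < a < hi -> x <= lo \/ hi <= x ->
  slide lo hi a b x = x.
Proof. by move=> ha xout; rewrite /slide tent_eq0 // mulr0 addr0. Qed.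

Lemma slide_id lo hi a x : slide lo hi a a x = x.
Proof. by rewrite /slide subrr mul0r addr0. Qed.

Lemma slide_center lo hi a b : lo < a < hi -> slide lo hi a b a = b.
Proof. by move=> h; rewrite /slide tent_peak // mulr1 subrKC. Qed.

Lemma slideK lo hi a b : lo < a < hi -> lo < b < hi ->
  cancel (slide lo hi a b) (slide lo hi b a).
Proof.
move=> ha hb x.
have [xl|lx] := lerP x lo; first by rewrite !slide_out //; left.
have [hx|xh] := lerP hi x; first by rewrite !slide_out //; right.
move: (ha) => /andP[la ah].
have [xa|ax] := lerP x a.
  pose t := (x - lo) / (a - lo).
  have ex : x = lo + t * (a - lo).
    by rewrite /t mulfVK ?subr_eq0 ?gt_eqF // addrC subrK.
  have t01 : 0 <= t <= 1.
    rewrite /t divr_ge0 ?subr_ge0 ?(ltW lx) ?(ltW la) //=.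
    by rewrite ler_pdivrMr ?subr_gt0 // mul1r lerD2r.
  rewrite ex /slide tent_left //.
  have -> : lo + t * (a - lo) + (b - a) * t = lo + t * (b - lo) by ring.
  by rewrite tent_left //; ring.
pose t := (hi - x) / (hi - a).
have ex : x = hi - t * (hi - a).
  by rewrite /t mulfVK ?subr_eq0 ?gt_eqF // opprB addrC subrK.
have t01 : 0 <= t <= 1.
  rewrite /t divr_ge0 ?subr_ge0 ?(ltW xh) ?(ltW ah) //=.
  by rewrite ler_pdivrMr ?subr_gt0 // mul1r lerD2l lerN2 ltW.
rewrite ex /slide tent_right //.
have -> : hi - t * (hi - a) + (b - a) * t = hi - t * (hi - b) by ring.
by rewrite tent_right //; ring.
Qed.

End slide.

Section slide_continuous.
Variables (R : realType) (X : topologicalType) (lo hi : R) (x0 : X).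

Lemma tent_continuous (a u : X -> R) : lo < a x0 < hi ->
  {for x0, continuous a} -> {for x0, continuous u} ->
  {for x0, continuous (fun y => tent lo (a y) hi (u y))}.
Proof.
move=> /andP[la ah] ca cu.
have ratio (c d : X -> R) : d x0 != 0 -> {for x0, continuous c} ->
    {for x0, continuous d} -> {for x0, continuous (fun y => c y / d y)}.
  by move=> d0 cc cd; apply: cvgM => //; exact: cvgV.
apply: (@continuous_max _ _ (fun=> 0)
  (fun y => Num.min ((u y - lo) / (a y - lo)) ((hi - u y) / (hi - a y)))).
  exact: cvg_cst.
apply: (@continuous_min _ _ (fun y => (u y - lo) / (a y - lo))
  (fun y => (hi - u y) / (hi - a y)));
  by apply: ratio; rewrite ?subr_eq0 ?gt_eqF //; apply: cvgB => //;
    exact: cvg_cst.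
Qed.

Lemma slide_continuous (a b u : X -> R) : lo < a x0 < hi ->
  {for x0, continuous a} -> {for x0, continuous b} -> {for x0, continuous u} ->
  {for x0, continuous (fun y => slide lo hi (a y) (b y) (u y))}.
Proof.
move=> ha ca cb cu; apply: cvgD => //; apply: cvgM; first exact: cvgB.
exact: tent_continuous.
Qed.

End slide_continuous.

Lemma row_continuous (X T : topologicalType) n (F : 'I_n -> X -> T) x :
  (forall j, {for x, continuous (F j)}) ->
  {for x, continuous (fun y => \row_j F j y)}.
Proof.
move=> cF A [P Pn sPA]; apply: (filterS sPA).
have : \forall y \near x, forall j, P ord0 j (F j y).
  by apply: filter_forall => j; apply: (cF j); have := Pn ord0 j; rewrite mxE.
by apply: filterS => y Py i j; rewrite ord1 mxE.
Qed.

Lemma fst_continuous (X Y : topologicalType) : continuous (@fst X Y).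
Proof. by case=> x y; exact: cvg_fst. Qed.

Lemma snd_continuous (X Y : topologicalType) : continuous (@snd X Y).
Proof. by case=> x y; exact: cvg_snd. Qed.

Lemma pair_continuous (X Y Z : topologicalType) (f : X -> Y) (g : X -> Z) x :
  {for x, continuous f} -> {for x, continuous g} ->
  {for x, continuous (fun y => (f y, g y))}.
Proof. by move=> cf cg; apply: cvg_pair. Qed.

Lemma row_coord_continuous (R : realType) n (X : topologicalType)
  (f : X -> 'rV[R]_n) j x :
  {for x, continuous f} -> {for x, continuous (fun y => f y ord0 j)}.
Proof.
move=> cf; apply: (@continuous_comp _ _ _ f (fun M : 'rV[R]_n => M ord0 j)) => //.
exact: coord_continuous.
Qed.

Section box_shears.
Variables (R : realType) (n : nat) (p : 'rV[R]_n) (r : R).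
Hypothesis r_gt0 : 0 < r.
Implicit Types (D s : seq 'I_n) (j k : 'I_n) (q z : 'rV[R]_n).

Local Notation lo j := (p ord0 j - r).
Local Notation hi j := (p ord0 j + r).
Local Notation RR := ('rV[R]_n * 'rV[R]_n)%type.

Definition in_box z := forall j, `|z ord0 j - p ord0 j| < r.

Definition closed_box z := forall j, `|z ord0 j - p ord0 j| <= r.

Definition mid D q j := if j \in D then q ord0 j else p ord0 j.

(* The shear in direction [k] changes only the [k]-th coordinate, by an
   amount depending only on the other coordinates, so the opposite shear
   undoes it.  Its weight is [1] at the point [mid D q] and [0] outside
   the box. *)
Definition weight D k q z : R :=
  \prod_(j | j != k) tent (lo j) (mid D q j) (hi j) (z ord0 j).

Definition target D k q z := p ord0 k + weight D k q z * (q ord0 k - p ord0 k).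

Definition set_coord k (f : R -> R) z : 'rV[R]_n :=
  \row_j if j == k then f (z ord0 k) else z ord0 j.

Definition shear D k q z :=
  set_coord k (slide (lo k) (hi k) (p ord0 k) (target D k q z)) z.

Definition unshear D k q z :=
  set_coord k (slide (lo k) (hi k) (target D k q z) (p ord0 k)) z.

Lemma in_box_coord q j : in_box q -> lo j < q ord0 j < hi j.
Proof. by move=> /(_ j); rewrite ltr_norml => /andP[? ?]; apply/andP; split; lra. Qed.

Lemma center_coord j : lo j < p ord0 j < hi j.
Proof. by apply/andP; split; have := r_gt0; lra. Qed.

Lemma mid_in_box D q j : in_box q -> lo j < mid D q j < hi j.
Proof. by rewrite /mid; case: ifP => _ qB; [exact: in_box_coord|exact: center_coord]. Qed.

Lemma weight_in01 D k q z : in_box q -> 0 <= weight D k q z <= 1.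
Proof.
move=> qB; rewrite prodr_ge0 => [|j _]; last exact: tent_ge0.
by rewrite prodr_ile1 // => j _; rewrite tent_ge0 tent_le1 ?mid_in_box.
Qed.

Lemma target_set_coord D k q f z : target D k q (set_coord k f z) = target D k q z.
Proof. by congr (_ + _ * _); apply: eq_bigr => j /negbTE jk; rewrite mxE jk. Qed.

Lemma target_in_box D k q z : in_box q -> lo k < target D k q z < hi k.
Proof.
move=> qB; have /andP[w0 w1] := weight_in01 D k z qB.
have /andP[qlo qhi] := in_box_coord k qB; rewrite /target.
move: (weight D k q z) w0 w1 => w w0 w1.
have [d0|d0] := lerP 0 (q ord0 k - p ord0 k).
  have : w * (q ord0 k - p ord0 k) <= q ord0 k - p ord0 k by rewrite ler_piMl.
  have : 0 <= w * (q ord0 k - p ord0 k) by rewrite mulr_ge0.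
  by move=> ? ?; apply/andP; split; have := r_gt0; lra.
have : q ord0 k - p ord0 k <= w * (q ord0 k - p ord0 k) by rewrite ler_niMl // ltW.
have : w * (q ord0 k - p ord0 k) <= 0 by rewrite mulr_ge0_le0 // ltW.
by move=> ? ?; apply/andP; split; have := r_gt0; lra.
Qed.

Lemma set_coordK k f g z : cancel f g -> set_coord k g (set_coord k f z) = z.
Proof.
move=> fK; apply/rowP => j; rewrite !mxE.
by case: eqVneq => [->|_]; rewrite ?eqxx ?fK.
Qed.

Lemma shearK D k q : in_box q -> cancel (shear D k q) (unshear D k q).
Proof.
move=> qB z; rewrite /unshear /shear target_set_coord.
by apply: set_coordK; apply: slideK; rewrite ?center_coord ?target_in_box.
Qed.

Lemma unshearK D k q : in_box q -> cancel (unshear D k q) (shear D k q).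
Proof.
move=> qB z; rewrite /unshear /shear target_set_coord.
by apply: set_coordK; apply: slideK; rewrite ?center_coord ?target_in_box.
Qed.

Lemma shear_out D k q z : in_box q -> ~ in_box z ->
  shear D k q z = z /\ unshear D k q z = z.
Proof.
move=> qB /existsNP[j /negP]; rewrite -leNgt ler_normr => zj.
have zj_out : z ord0 j <= lo j \/ hi j <= z ord0 j.
  by case/orP: zj => ?; [right|left]; lra.
have [<-|jk] := eqVneq j k.
  by split; apply/rowP => i; rewrite mxE; case: eqVneq => [->|//];
    rewrite slide_out ?center_coord ?target_in_box.
have w0 : weight D k q z = 0.
  by rewrite /weight (bigD1 j) //= tent_eq0 ?mid_in_box // mul0r.
by split; apply/rowP => i; rewrite mxE /target w0 mul0r addr0 slide_id;
  case: eqVneq => [->|].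
Qed.

Lemma shear_mid D k q : in_box q -> k \notin D ->
  shear D k q (\row_j mid D q j) = \row_j mid (k :: D) q j.
Proof.
move=> qB kD.
have w1 : weight D k q (\row_j mid D q j) = 1.
  by apply: big1 => j _; rewrite mxE tent_peak ?mid_in_box.
apply/rowP => j; rewrite !mxE /target w1 mul1r subrKC.
have [->|jk] := eqVneq j k; last by rewrite /mid in_cons (negbTE jk).
by rewrite {1}/mid (negbTE kD) slide_center ?center_coord // /mid mem_head.
Qed.

Fixpoint shears s q z :=
  if s is k :: s' then shear s' k q (shears s' q z) else z.

Fixpoint unshears s q z :=
  if s is k :: s' then unshears s' q (unshear s' k q z) else z.

Lemma shearsK s q : in_box q -> cancel (shears s q) (unshears s q).
Proof. by move=> qB; elim: s => //= k s IH z; rewrite shearK. Qed.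

Lemma unshearsK s q : in_box q -> cancel (unshears s q) (shears s q).
Proof. by move=> qB; elim: s => //= k s IH z; rewrite IH unshearK. Qed.

Lemma shears_out s q z : in_box q -> ~ in_box z ->
  shears s q z = z /\ unshears s q z = z.
Proof.
move=> qB zB; elim: s => //= k s [-> us_z].
by have [-> ->] := shear_out s k qB zB.
Qed.

Lemma shears_center q : in_box q -> shears (enum 'I_n) q p = q.
Proof.
move=> qB; suff shears_mid s : uniq s -> shears s q p = \row_j mid s q j.
  by apply/rowP => j; rewrite shears_mid ?enum_uniq // mxE /mid mem_enum.
elim: s => [_|k s IH /andP[ks us]]; first by apply/rowP => j; rewrite mxE.
by rewrite /= IH // shear_mid.
Qed.

Lemma weight_continuous D k q0 z0 : in_box q0 ->
  {for (q0, z0), continuous (fun x : RR => weight D k x.1 x.2)}.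
Proof.
move=> qB; apply: (cvg_big mul_continuous) => j _.
apply: tent_continuous; first exact: mid_in_box.
  rewrite /mid; case: (j \in D); last exact: cvg_cst.
  exact/row_coord_continuous/fst_continuous.
exact/row_coord_continuous/snd_continuous.
Qed.

Lemma target_continuous D k q0 z0 : in_box q0 ->
  {for (q0, z0), continuous (fun x : RR => target D k x.1 x.2)}.
Proof.
move=> qB; apply: cvgD; first exact: cvg_cst.
apply: cvgM; first exact: weight_continuous.
by apply: cvgB; [exact/row_coord_continuous/fst_continuous|exact: cvg_cst].
Qed.

Lemma shear_continuous D k q0 z0 : in_box q0 ->
  {for (q0, z0), continuous (fun x : RR => shear D k x.1 x.2)}.
Proof.
move=> qB; apply: row_continuous => j; case: eqP => _.
  apply: slide_continuous; rewrite ?center_coord //; first exact: cvg_cst.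
    exact: target_continuous.
  exact/row_coord_continuous/snd_continuous.
exact/row_coord_continuous/snd_continuous.
Qed.

Lemma unshear_continuous D k q0 z0 : in_box q0 ->
  {for (q0, z0), continuous (fun x : RR => unshear D k x.1 x.2)}.
Proof.
move=> qB; apply: row_continuous => j; case: eqP => _.
  apply: slide_continuous; rewrite ?target_in_box //; first exact: target_continuous.
    exact: cvg_cst.
  exact/row_coord_continuous/snd_continuous.
exact/row_coord_continuous/snd_continuous.
Qed.

Lemma shears_continuous s q0 z0 : in_box q0 ->
  {for (q0, z0), continuous (fun x : RR => shears s x.1 x.2)}.
Proof.
move=> qB; elim: s => [|k s IH] /=; first exact: snd_continuous.
apply: (@continuous_comp _ _ _ (fun x : RR => (x.1, shears s x.1 x.2))
  (fun y : RR => shear s k y.1 y.2)); last exact: shear_continuous.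
by apply: pair_continuous; [exact: fst_continuous|exact: IH].
Qed.

Lemma unshears_continuous s q0 z0 : in_box q0 ->
  {for (q0, z0), continuous (fun x : RR => unshears s x.1 x.2)}.
Proof.
move=> qB; elim: s z0 => [|k s IH] z0 /=; first exact: snd_continuous.
apply: (@continuous_comp _ _ _ (fun x : RR => (x.1, unshear s k x.1 x.2))
  (fun y : RR => unshears s y.1 y.2)); last exact: IH.
by apply: pair_continuous; [exact: fst_continuous|exact: unshear_continuous].
Qed.

End box_shears.

Section homeo_family.
Context {Y X : topologicalType}.
Implicit Types (N : set Y) (S : set X) (h hi : Y -> X -> X).

Definition jointly_continuous N h :=
  forall y z, N y -> {for (y, z), continuous (fun x : Y * X => h x.1 x.2)}.

Definition homeo_family N h hi :=
  [/\ forall y, N y -> cancel (h y) (hi y), forall y, N y -> cancel (hi y) (h y),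
      jointly_continuous N h & jointly_continuous N hi].

Definition fixes_outside N S h := forall y z, N y -> ~ S z -> h y z = z.

Lemma fixes_outside_stable N S h hi y z : N y -> cancel (h y) (hi y) ->
  fixes_outside N S hi -> S z -> S (h y z).
Proof.
move=> Ny hK hiS Sz; have [//|Shz] := pselect (S (h y z)).
by rewrite -(hiS y _ Ny Shz) hK.
Qed.

End homeo_family.

Definition moves_within {X : topologicalType} (N S : set X) (c : X)
  (h hi : X -> X -> X) :=
  [/\ homeo_family N h hi, fixes_outside N S h, fixes_outside N S hi &
      forall y, N y -> h y c = y].

Section rV_mover.
Variables (R : realType) (n : nat).
Implicit Types (p : 'rV[R]_n) (r : R).

Lemma in_box_open p r : 0 < r -> open (in_box p r).
Proof.
move=> r0; suff -> : in_box p r = ball p r by exact: ball_open.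
apply/seteqP; split => q.
  by move=> qB; split => // i j; rewrite ord1 -ball_normE /= distrC; exact: qB.
by move=> [_ qB] j; have := qB ord0 j; rewrite -ball_normE /= distrC.
Qed.

Lemma closed_box_compact p r : compact (closed_box p r).
Proof.
pose I j := `[p ord0 j - r, p ord0 j + r]%classic.
have -> : closed_box p r = [set z | forall j, I j (z ord0 j)].
  apply/seteqP; split => z /= zK j; have := zK j; rewrite /I /= in_itv /=.
    by rewrite ler_norml => /andP[? ?]; apply/andP; split; lra.
  by move=> /andP[? ?]; rewrite ler_norml; apply/andP; split; lra.
by apply: (@rV_compact _ n I) => j; exact: segment_compact.
Qed.

Lemma rV_mover p (A : set 'rV[R]_n) : nbhs p A ->
  exists (N K : set 'rV[R]_n) h hi,
    [/\ open N, N p, compact K, K `<=` A & moves_within N K p h hi].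
Proof.
move=> /nbhs_ballP[e /= e0 pA]; pose r := e / 2.
have r0 : 0 < r by rewrite divr_gt0.
have outK z : ~ closed_box p r z -> ~ in_box p r z.
  by move=> Kz zB; apply: Kz => j; exact/ltW.
exists (in_box p r), (closed_box p r), (shears p r (enum 'I_n)),
  (unshears p r (enum 'I_n)).
split.
- exact: in_box_open.
- by move=> j; rewrite subrr normr0.
- exact: closed_box_compact.
- move=> z Kz; apply: pA; split => // i j; rewrite ord1 -ball_normE /= distrC.
  by apply: le_lt_trans (Kz j) _; rewrite /r; lra.
split.
- split=> q.
  + exact: shearsK.
  + exact: unshearsK.
  + exact: shears_continuous.
  + exact: unshears_continuous.
- by move=> q z qB /outK zB; have [] := shears_out r0 (enum 'I_n) qB zB.
- by move=> q z qB /outK zB; have [] := shears_out r0 (enum 'I_n) qB zB.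
- exact: shears_center.
Qed.

End rV_mover.

Lemma homeo_on_restrict (M X : topologicalType) (U : set M) (V : set X) f g
  (W : set M) : open U -> open V -> open W -> homeo_on U V f g ->
  open (V `&` g @^-1` W) /\ homeo_on (U `&` W) (V `&` g @^-1` W) f g.
Proof.
move=> oU oV oW [cf cg fg gf]; split.
  by move: cg; rewrite continuous_open_subspace // => /continuous_inP; apply.
split.
- exact: continuous_subspaceW cf.
- exact: continuous_subspaceW cg.
- move=> x [Ux Wx]; have [Vfx gfx] := fg x Ux.
  by split => //; split => //=; rewrite gfx.
- by move=> y [Vy Wgy]; have [Ugy fgy] := gf y Vy.
Qed.

Lemma near_eq_continuous (X Y : topologicalType) (f g : X -> Y) x :
  (\forall y \near x, f y = g y) -> {for x, continuous f} -> {for x, continuous g}.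
Proof.
move=> e cf; rewrite /prop_for /continuous_at -(nbhs_singleton e).
exact: cvg_trans (near_eq_cvg e) cf.
Qed.

Section chart_extension.
Variables (M X : topologicalType) (U : set M) (V : set X) (f : M -> X) (g : X -> M).
Variables (N K : set X).
Hypotheses (hM : hausdorff_space M) (oU : open U) (oV : open V)
  (fg : homeo_on U V f g) (oN : open N) (cK : compact K) (KV : K `<=` V).

Definition chart_extend (h : X -> X -> X) (y z : M) : M :=
  if pselect (U z) then g (h (f y) (f z)) else z.

Let NM := U `&` f @^-1` N.

Let f_continuous x : U x -> {for x, continuous f}.
Proof.
case: fg => + _ _ _; rewrite continuous_open_subspace // => cf Ux.
by apply: cf; rewrite inE.
Qed.

Let g_continuous_on : {within V, continuous g}.
Proof. by case: fg. Qed.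

Let g_continuous q : V q -> {for q, continuous g}.
Proof.
move: g_continuous_on; rewrite continuous_open_subspace // => cg Vq.
by apply: cg; rewrite inE.
Qed.

Let gfK x : U x -> V (f x) /\ g (f x) = x.
Proof. by case: fg => _ _ + _; apply. Qed.

Let fgK q : V q -> U (g q) /\ f (g q) = q.
Proof. by case: fg => _ _ _; apply. Qed.

Lemma open_chart_domain : open NM.
Proof.
case: fg => + _ _ _; rewrite continuous_open_subspace // => /continuous_inP.
by apply.
Qed.

Section one_map.
Variable h : X -> X -> X.
Hypotheses (hK : fixes_outside N K h) (hc : jointly_continuous N h)
  (h_stable : forall q z, N q -> K z -> K (h q z)).

Lemma chart_stable q z : N q -> V z -> V (h q z).
Proof.
move=> Nq Vz; have [/(h_stable Nq)/KV //|nKz] := pselect (K z).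
by rewrite hK.
Qed.

Lemma chart_extend_out : fixes_outside NM (g @` K) (chart_extend h).
Proof.
move=> y z [Uy Ny] gKz; rewrite /chart_extend; case: pselect => // Uz.
have [Vfz gfz] := gfK Uz.
by rewrite hK // => Kfz; apply: gKz; exists (f z).
Qed.

Lemma chart_extend_continuous_in y z : NM y -> U z ->
  {for (y, z), continuous (fun x : M * M => chart_extend h x.1 x.2)}.
Proof.
move=> [Uy Ny] Uz.
apply: (@near_eq_continuous _ _ (fun x : M * M => g (h (f x.1) (f x.2)))).
  have : \forall x \near (y, z), U x.2.
    by apply: snd_continuous; exact: open_nbhs_nbhs.
  by apply: filterS => x Ux; rewrite /chart_extend; case: pselect.
apply: (@continuous_comp _ _ _ (fun x : M * M => h (f x.1) (f x.2)) g).
  apply: (@continuous_comp _ _ _ (fun x : M * M => (f x.1, f x.2))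
    (fun q : X * X => h q.1 q.2)); last exact: hc.
  apply: pair_continuous.
    by apply: continuous_comp; [exact: fst_continuous|exact: f_continuous].
  by apply: continuous_comp; [exact: snd_continuous|exact: f_continuous].
by apply: g_continuous; apply: chart_stable => //; case: (gfK Uz).
Qed.

(* The support [g @` K] is compact, hence closed in the Hausdorff space [M],
   and the extension is the identity off it. *)
Lemma chart_extend_continuous_out y z : NM y -> ~ U z ->
  {for (y, z), continuous (fun x : M * M => chart_extend h x.1 x.2)}.
Proof.
move=> NMy nUz; have gK_closed : closed (g @` K).
  apply: compact_closed => //; apply: continuous_compact => //.
  exact: continuous_subspaceW g_continuous_on.
have gKz : ~ (g @` K) z.
  by move=> [q Kq gqz]; apply: nUz; rewrite -gqz; case: (fgK (KV Kq)).
apply: (@near_eq_continuous _ _ snd); last exact: snd_continuous.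
have NMx : \forall x \near (y, z), NM x.1.
  apply: fst_continuous; apply: open_nbhs_nbhs.
  by split; first exact: open_chart_domain.
have gKx : \forall x \near (y, z), (~` (g @` K)) x.2.
  apply: snd_continuous; apply: open_nbhs_nbhs.
  by split => //; exact: closed_openC.
by apply: filterS2 NMx gKx => x NMx gKx; rewrite chart_extend_out.
Qed.

Lemma chart_extend_continuous : jointly_continuous NM (chart_extend h).
Proof.
move=> y z NMy; have [Uz|nUz] := pselect (U z).
  exact: chart_extend_continuous_in.
exact: chart_extend_continuous_out.
Qed.

End one_map.

Lemma chart_extendK h hi : (forall q, N q -> cancel (h q) (hi q)) ->
  (forall q z, N q -> V z -> V (h q z)) ->
  forall y, NM y -> cancel (chart_extend h y) (chart_extend hi y).
Proof.
move=> hK hV y [Uy Ny] z; rewrite /chart_extend.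
case: (pselect (U z)) => Uz; last by case: pselect.
have [Vfz gfz] := gfK Uz; have [Ug fgh] := fgK (hV _ _ Ny Vfz).
by case: pselect => // Ug'; rewrite fgh hK.
Qed.

Lemma chart_extend_family h hi : homeo_family N h hi ->
  fixes_outside N K h -> fixes_outside N K hi ->
  [/\ homeo_family NM (chart_extend h) (chart_extend hi),
      fixes_outside NM (g @` K) (chart_extend h) &
      fixes_outside NM (g @` K) (chart_extend hi)].
Proof.
move=> [hK hiK hc hic] hout hiout.
have h_stable q z : N q -> K z -> K (h q z).
  by move=> Nq; apply: fixes_outside_stable (hK q Nq) hiout.
have hi_stable q z : N q -> K z -> K (hi q z).
  by move=> Nq; apply: fixes_outside_stable (hiK q Nq) hout.
split; [split|exact: chart_extend_out|exact: chart_extend_out].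
- by apply: chart_extendK => //; exact: chart_stable.
- by apply: chart_extendK => //; exact: chart_stable.
- exact: chart_extend_continuous.
- exact: chart_extend_continuous.
Qed.

End chart_extension.

Lemma manifold_mover (M : topologicalType) : topological_manifold M ->
  forall (O : set M) c, open O -> O c ->
  exists N h hi, [/\ open N, N c, N `<=` O & moves_within N O c h hi].
Proof.
move=> [hM _ [n charts]] O c oO Oc.
have [U0 [oU0 U0c [V0 [f [g [oV0 fg0]]]]]] := charts c.
(* Shrinking the chart domain to [U0 `&` O] keeps the supports inside [O]. *)
have [oV fg] := homeo_on_restrict oU0 oV0 oO fg0.
have oU : open (U0 `&` O) by exact: openI.
have [_ _ gfK _] := fg.
have [Vfc _] := gfK c (conj U0c Oc).
have [N [K [h [hi [oN Nfc cK KV [hfam hout hiout hfc]]]]]] :=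
  @rV_mover Rdefinitions.R n (f c) _ (open_nbhs_nbhs (conj oV Vfc)).
have [ehfam ehout ehiout] :=
  chart_extend_family hM oU oV fg oN cK KV hfam hout hiout.
have gKO : ~` O `<=` ~` (g @` K).
  by move=> z nOz [q /KV[_ Ogq] gq]; apply: nOz; rewrite -gq.
exists ((U0 `&` O) `&` f @^-1` N), (chart_extend (U0 `&` O) f g h),
  (chart_extend (U0 `&` O) f g hi); split.
- exact: (open_chart_domain oU fg oN).
- by [].
- by move=> y [[]].
split => //.
- by move=> y z Ny /gKO; exact: ehout.
- by move=> y z Ny /gKO; exact: ehiout.
- move=> y [Uy Ny]; rewrite /chart_extend.
  case: pselect => [Uc|]; last by case.
  by rewrite hfc //; case: (gfK y Uy).
Qed.

Lemma hausdorff_separate (X : topologicalType) (W : finType) (b : W -> X) :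
  hausdorff_space X -> injective b ->
  exists O : W -> set X, [/\ forall w, open (O w), forall w, O w (b w) &
    forall w w' z, O w z -> O w' z -> w = w'].
Proof.
rewrite open_hausdorff => hX b_inj.
have /choice[S HS] : forall ww : W * W, exists AB : set X * set X,
    ww.1 != ww.2 -> [/\ AB.1 (b ww.1), AB.2 (b ww.2), open AB.1, open AB.2 &
                        AB.1 `&` AB.2 = set0].
  move=> [w w']; have [_|ne] := eqVneq w w'; first by exists (set0, set0).
  have bne : b w != b w' by rewrite (inj_eq b_inj).
  have [AB [bw bw'] [oA oB /eqP AB0]] := hX _ _ bne.
  by rewrite !in_setE in bw bw'; exists AB.
pose O w := [set z | forall w', w' != w -> (S (w, w')).1 z /\ (S (w', w)).2 z].
exists O; split.
- move=> w; rewrite openE => z Oz; apply: filter_forall => w'.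
  have [->|ne] := eqVneq w' w; first exact: nearW.
  have ne' : w != w' by rewrite eq_sym.
  have [_ _ oA _ _] := HS (w, w') ne'.
  have [_ _ _ oB _] := HS (w', w) ne.
  have [Az Bz] := Oz w' ne.
  have nA := open_nbhs_nbhs (conj oA Az); have nB := open_nbhs_nbhs (conj oB Bz).
  by apply: filterS (filterI nA nB) => x [].
- move=> w w' ne; have ne' : w != w' by rewrite eq_sym.
  have [bw _ _ _ _] := HS (w, w') ne'.
  by have [_ bw' _ _ _] := HS (w', w) ne.
- move=> w w' z Oz O'z; apply/eqP/negPn/negP => ne.
  have [_ _ _ _ AB0] := HS (w, w') ne.
  have ne' : w' != w by rewrite eq_sym.
  have [Az _] := Oz w' ne'.
  have [_ Bz] := O'z w ne.
  by have : set0 z by rewrite -AB0.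
Qed.

Lemma ptws_eval_continuous (I : eqType) (T : topologicalType) (i : I) :
  continuous (fun f : {ptws I -> T} => f i).
Proof. exact: (@proj_continuous I (fun _ => T) i). Qed.

Lemma ptws_continuous (X : topologicalType) (I : eqType) (T : topologicalType)
  (G : X -> {ptws I -> T}) x :
  (forall i, {for x, continuous (fun y => G y i)}) -> {for x, continuous G}.
Proof.
move=> cG; apply/cvg_sup => i.
have surj : (fun g : {ptws I -> T} => g i) @` [set: {ptws I -> T}] = [set: T].
  by rewrite eqEsubset; split => t // _; exists (dfwith (G x) i t); rewrite ?dfwithin.
apply/(@cvg_image _ _ (fun g : {ptws I -> T} => g i)) => //.
move=> B /cG /= GB; exists ((fun g : {ptws I -> T} => g i) @^-1` B) => //.
by rewrite image_preimage.
Qed.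

Section composite_mover.
Variables (X : topologicalType) (W : finType) (b : W -> X).
Variables (O N : W -> set X) (h hi : W -> X -> X -> X).
Hypotheses (O_uniq : forall w w' z, O w z -> O w' z -> w = w')
  (oN : forall w, open (N w)) (NO : forall w, N w `<=` O w)
  (bO : forall w, O w (b w))
  (hmove : forall w, moves_within (N w) (O w) (b w) (h w) (hi w)).
Implicit Types (s : seq W) (y : {ptws W -> X}).

Definition near_config y := forall w, N w (y w).

Let eval_fst_continuous w x :
  {for x, continuous (fun x : {ptws W -> X} * X => x.1 w)}.
Proof.
apply: (@continuous_comp _ _ _ fst (fun g : {ptws W -> X} => g w)).
  exact: fst_continuous.
exact: ptws_eval_continuous.
Qed.

Fixpoint move_all s y z :=
  if s is w :: s' then h w (y w) (move_all s' y z) else z.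

Fixpoint unmove_all s y z :=
  if s is w :: s' then unmove_all s' y (hi w (y w) z) else z.

Lemma move_allK s y : near_config y -> cancel (move_all s y) (unmove_all s y).
Proof.
move=> Ny; elim: s => //= w s IH z.
by have [[hK _ _ _] _ _ _] := hmove w; rewrite hK.
Qed.

Lemma unmove_allK s y : near_config y -> cancel (unmove_all s y) (move_all s y).
Proof.
move=> Ny; elim: s => //= w s IH z.
by have [[_ hiK _ _] _ _ _] := hmove w; rewrite IH hiK.
Qed.

Lemma move_all_continuous s y z : near_config y ->
  {for (y, z), continuous (fun x : {ptws W -> X} * X => move_all s x.1 x.2)}.
Proof.
move=> Ny; elim: s => [|w s IH] /=; first exact: snd_continuous.
have [[_ _ hc _] _ _ _] := hmove w.
apply: (@continuous_comp _ _ _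
  (fun x : {ptws W -> X} * X => (x.1 w, move_all s x.1 x.2))
  (fun q : X * X => h w q.1 q.2)); last exact: hc.
apply: pair_continuous; last exact: IH.
exact: eval_fst_continuous.
Qed.

Lemma unmove_all_continuous s y z : near_config y ->
  {for (y, z), continuous (fun x : {ptws W -> X} * X => unmove_all s x.1 x.2)}.
Proof.
move=> Ny; elim: s z => [|w s IH] z /=; first exact: snd_continuous.
have [[_ _ _ hic] _ _ _] := hmove w.
apply: (@continuous_comp _ _ _
  (fun x : {ptws W -> X} * X => (x.1, hi w (x.1 w) x.2))
  (fun q : {ptws W -> X} * X => unmove_all s q.1 q.2)); last exact: IH.
apply: pair_continuous; first exact: fst_continuous.
apply: (@continuous_comp _ _ _ (fun x : {ptws W -> X} * X => (x.1 w, x.2))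
  (fun q : X * X => hi w q.1 q.2)); last exact: hic.
apply: pair_continuous; last exact: snd_continuous.
exact: eval_fst_continuous.
Qed.

Lemma move_all_base s y w : near_config y -> uniq s ->
  move_all s y (b w) = if w \in s then y w else b w.
Proof.
move=> Ny; elim: s => //= w' s IH /andP[w's us]; rewrite in_cons IH //.
have [_ hout _ hb] := hmove w'.
have [->|ne] := eqVneq w w'; first by rewrite (negbTE w's) hb.
rewrite hout //= => O'w; move/eqP: ne; apply; apply: O_uniq O'w.
by case: (w \in s); [exact: NO|exact: bO].
Qed.

Lemma near_config_open : open near_config.
Proof.
rewrite openE => y Ny.
apply: (@filter_forall _ _ (fun w (g : {ptws W -> X}) => N w (g w)) _
  (nbhs_filter y)) => w.
by apply: (@ptws_eval_continuous _ _ w y); exact: open_nbhs_nbhs.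
Qed.

End composite_mover.

Lemma configuration_mover (M : topologicalType) (W : finType) (b : W -> M) :
  topological_manifold M -> injective b ->
  exists (U : set {ptws W -> M}) (H Hi : {ptws W -> M} -> M -> M),
    [/\ open U, U b, homeo_family U H Hi & forall y w, U y -> H y (b w) = y w].
Proof.
move=> hM b_inj; have [hausM _ _] := hM.
have [Os [oO bO O_uniq]] := hausdorff_separate hausM b_inj.
have /choice[mv mvP] : forall w, exists mv : set M * (M -> M -> M) * (M -> M -> M),
    [/\ open mv.1.1, mv.1.1 (b w), mv.1.1 `<=` Os w &
        moves_within mv.1.1 (Os w) (b w) mv.1.2 mv.2].
  move=> w; have [N [h [hi ?]]] := manifold_mover hM (oO w) (bO w).
  by exists (N, h, hi).
pose N w := (mv w).1.1; pose h w := (mv w).1.2; pose hi w := (mv w).2.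
have oN w : open (N w) by case: (mvP w).
have Nb w : N w (b w) by case: (mvP w).
have NO w : N w `<=` Os w by case: (mvP w).
have hmove w : moves_within (N w) (Os w) (b w) (h w) (hi w) by case: (mvP w).
exists (near_config N), (move_all h (enum W)), (unmove_all hi (enum W)); split.
- exact: near_config_open.
- exact: Nb.
- split=> y.
  + exact: move_allK.
  + exact: unmove_allK.
  + by move=> z; exact: move_all_continuous.
  + by move=> z; exact: unmove_all_continuous.
- move=> y w Ny.
  by rewrite (move_all_base O_uniq NO bO hmove) ?mem_enum ?enum_uniq.
Qed.

Lemma Conf_comp (M : topologicalType) (V : finType) (e : rel V) (k : M -> M)
  (x : {ptws V -> M}) : injective k -> Conf e M x -> Conf e M (fun v => k (x v)).
Proof. by move=> k_inj Ex u v /Ex exy /k_inj. Qed.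

Section forget_trivialization.
Variables (M : topologicalType) (V : finType) (e : rel V).
Variables (W : finType) (eH : rel W) (i : W -> V).
Hypothesis sub : subgraph eH e i.

Local Notation p := (forget i M).

Lemma forget_Conf x : Conf e M x -> Conf eH M (p x).
Proof. by case: sub => _ sube Ex w w' /sube; exact: Ex. Qed.

Lemma forget_continuous : continuous p.
Proof. by move=> x; apply: ptws_continuous => w; exact: ptws_eval_continuous. Qed.

Variables (U : set {ptws W -> M}) (b : {ptws W -> M}) (H Hi : {ptws W -> M} -> M -> M).
Hypotheses (HH : homeo_family U H Hi) (Hb : forall y w, U y -> H y (b w) = y w).

Definition trivialize (x : {ptws V -> M}) : {ptws W -> M} * {ptws V -> M} :=
  (p x, fun v => Hi (p x) (x v)).

Definition untrivialize (yx : {ptws W -> M} * {ptws V -> M}) : {ptws V -> M} :=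
  fun v => H yx.1 (yx.2 v).

Let fiber := [set x | Conf e M x /\ p x = b].

Lemma forget_untrivialize y x : U y -> p x = b -> p (untrivialize (y, x)) = y.
Proof.
move=> Uy px; apply/funext => w.
by rewrite /untrivialize /forget /= -[x (i w)]/(p x w) px Hb.
Qed.

Lemma forget_trivialize x : U (p x) -> p (trivialize x).2 = b.
Proof.
case: HH => HK _ _ _ Ux; apply/funext => w.
by rewrite /forget /= -[x (i w)]/(p x w) -(Hb w Ux) HK.
Qed.

Lemma trivialize_continuous : {within Conf e M `&` p @^-1` U, continuous trivialize}.
Proof.
apply: continuous_in_subspaceT => x; rewrite inE => -[_ Ux].
apply: pair_continuous; first exact: forget_continuous.
apply: ptws_continuous => v.
apply: (@continuous_comp _ _ _ (fun x' : {ptws V -> M} => (p x', x' v))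
  (fun q : {ptws W -> M} * M => Hi q.1 q.2)); last by case: HH => _ _ _; apply.
by apply: pair_continuous; [exact: forget_continuous|exact: ptws_eval_continuous].
Qed.

Lemma untrivialize_continuous :
  {within (Conf eH M `&` U) `*` fiber, continuous untrivialize}.
Proof.
apply: continuous_in_subspaceT => -[y x]; rewrite inE => -[[_ Uy] _].
apply: ptws_continuous => v.
apply: (@continuous_comp _ _ _
  (fun yx : {ptws W -> M} * {ptws V -> M} => (yx.1, yx.2 v))
  (fun q : {ptws W -> M} * M => H q.1 q.2)); last by case: HH => _ _ + _; apply.
apply: pair_continuous; first exact: fst_continuous.
apply: (@continuous_comp _ _ _ snd (fun x' : {ptws V -> M} => x' v)).
  exact: snd_continuous.
exact: ptws_eval_continuous.
Qed.

Lemma trivialize_homeo :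
  homeo_on (Conf e M `&` p @^-1` U) ((Conf eH M `&` U) `*` fiber)
    trivialize untrivialize.
Proof.
case: (HH) => HK HiK _ _.
split; [exact: trivialize_continuous|exact: untrivialize_continuous| |].
- move=> x [Ex Ux]; split; last by apply/funext => v; rewrite /untrivialize /= HiK.
  split; first by split => //; exact: forget_Conf.
  split; last exact: forget_trivialize.
  by apply: (@Conf_comp _ _ _ (Hi (p x))) Ex; exact: can_inj (HiK _ Ux).
- move=> [y x] [[_ Uy] [Ex px]]; rewrite /trivialize forget_untrivialize //.
  split; last by congr pair; apply/funext => v; rewrite /untrivialize /= HK.
  split; last by rewrite /= forget_untrivialize.
  by apply: (@Conf_comp _ _ _ (H y)) Ex; exact: can_inj (HK _ Uy).
Qed.

End forget_trivialization.

Theorem corollary11p4 (M : topologicalType) (V : finType) (e : rel V)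
  (W : finType) (eH : rel W) (i : W -> V) :
  topological_manifold M -> connected [set: M] ->
  simple_graph e -> simple_graph eH -> subgraph eH e i -> complete_graph eH ->
  locally_trivial_bundle (Conf e M) (Conf eH M) (forget i M).
Proof.
move=> hM _ _ _ sub complH; split.
- by move=> x; exact: forget_Conf.
- exact/continuous_subspaceT/forget_continuous.
move=> b Bb.
have b_inj : injective b.
  by move=> w w' bw; have [//|/complH/Bb] := eqVneq w w'.
have [U [H [Hi [oU Ub HH Hb]]]] := configuration_mover hM b_inj.
exists U; split => //.
exists {ptws V -> M}, [set x | Conf e M x /\ forget i M x = b].
exists (trivialize i Hi), (untrivialize H).
by split; [exact: trivialize_homeo|].
Qed.
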